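(* Let $n\ge2$ be even, let $Q(x)=\sum_{i=1}^{n/2-1}Tr_1^n(x^{2^i+1})+Tr_1^{n/2}(x^{2^{n/2}+1})$ on $\mathbb{F}_{2^n}$, and let $f:\mathbb{F}_{2^n}\to\mathbb{F}_2$. Then $f$ is bent-negabent if and only if both $f$ and $f+Q$ are bent.
   Context: $Tr_1^m(z)=z+z^2+\dots+z^{2^{m-1}}$; $Tr=Tr_1^n$. Fix a self-dual basis $\{\alpha_i\}$ of $\mathbb{F}_{2^n}$ over $\mathbb{F}_2$ ($Tr(\alpha_i\alpha_j)=\delta_{ij}$), identify $\mathbb{F}_{2^n}$ with $\mathbb{F}_2^n$ via coordinates, and let $wt(x)$ be the number of nonzero coordinates. For $g:\mathbb{F}_{2^n}\to\mathbb{F}_2$: $g$ is bent if $\left|\sum_x(-1)^{g(x)+Tr(\mu x)}\right|=2^{n/2}$ for all $\mu$; negabent if $\left|\sum_x(-1)^{g(x)+Tr(\mu x)}\mathrm{i}^{wt(x)}\right|=2^{n/2}$ for all $\mu$ ($\mathrm{i}=\sqrt{-1}$); bent-negabent if both. *)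

From HB Require Import structures.
From mathcomp Require Import all_boot all_order all_algebra all_field.
Set Implicit Arguments. Unset Strict Implicit. Unset Printing Implicit Defensive.
Import Order.TTheory GRing.Theory Num.Theory.
Local Open Scope ring_scope.

Definition trm (F : finFieldType) (m : nat) (z : F) : F :=
  \sum_(i < m) z ^+ (2 ^ i).

(* Reading an element of F_2 (subset {0,1} of F) as a bit. *)
Definition tobit (F : finFieldType) (y : F) : bool := y != 0.

Definition self_dual (F : finFieldType) (n : nat) (alpha : 'I_n -> F) : Prop :=
  forall i j : 'I_n, trm n (alpha i * alpha j) = (i == j)%:R.

(* Coordinates of x in a self-dual basis are Tr(x alpha_i); wt = Hamming weight. *)
Definition wt (F : finFieldType) (n : nat) (alpha : 'I_n -> F) (x : F) : nat :=
  #|[set i : 'I_n | tobit (trm n (x * alpha i))]|.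

Definition sgn (b : bool) : algC := (-1) ^+ b.

Definition walsh (F : finFieldType) (n : nat) (g : F -> bool) (mu : F) : algC :=
  \sum_(x : F) sgn (g x (+) tobit (trm n (mu * x))).

Definition nega_walsh (F : finFieldType) (n : nat) (alpha : 'I_n -> F)
  (g : F -> bool) (mu : F) : algC :=
  \sum_(x : F) sgn (g x (+) tobit (trm n (mu * x))) * 'i ^+ wt alpha x.

Definition bent (F : finFieldType) (n : nat) (g : F -> bool) : Prop :=
  forall mu : F, `|walsh n g mu| = (2 ^ (n./2))%:R.

Definition negabent (F : finFieldType) (n : nat) (alpha : 'I_n -> F)
  (g : F -> bool) : Prop :=
  forall mu : F, `|nega_walsh alpha g mu| = (2 ^ (n./2))%:R.

Definition bent_negabent (F : finFieldType) (n : nat) (alpha : 'I_n -> F)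
  (g : F -> bool) : Prop := bent n g /\ negabent alpha g.

Definition Qpoly (F : finFieldType) (n : nat) (x : F) : F :=
  \sum_(1 <= i < n./2) trm n (x ^+ (2 ^ i + 1))
  + trm n./2 (x ^+ (2 ^ n./2 + 1)).

From HB Require Import structures.
From mathcomp Require Import all_boot all_order all_algebra all_field.
From mathcomp Require Import ring zify.
Set Implicit Arguments. Unset Strict Implicit. Unset Printing Implicit Defensive.
Import Order.TTheory GRing.Theory Num.Theory.
Local Open Scope ring_scope.

(* With respect to a self-dual basis, wt(x + y) = wt x + wt y - 2 #{k | x_k = y_k = 1}
   and Tr(xy) is the parity of that count, so phi(x) = i^wt(x) satisfies
   phi(x + y) = phi(x) phi(y) (-1)^Tr(xy).  The polarization
   Q(x + y) = Q(x) + Q(y) + Tr(x) Tr(y) + Tr(xy) shows that psi(x) = (-1)^Q(x) i^Tr(x)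
   satisfies the same identity, so phi/psi is an additive character (-1)^Tr(cx).
   Writing i^Tr(x) = (1 + i)/2 + (1 - i)/2 (-1)^Tr(x) then gives
   N_f(u) = (1 + i)/2 W(u + c) + (1 - i)/2 W(u + c + 1) with W the Walsh transform
   of f + Q, whence |N_f(u)|^2 = (W(u + c)^2 + W(u + c + 1)^2)/2.  Walsh values are
   integers, and a^2 + b^2 = 2 4^m forces a^2 = 4^m, so f is negabent exactly when
   f + Q is bent. *)

Lemma big_nat_double_split (V : nmodType) m (g : nat -> V) : (0 < m)%N ->
  \sum_(0 <= i < m + m) g i
  = g 0%N + \sum_(1 <= i < m) g i + g m + \sum_(1 <= i < m) g (m + m - i)%N.
Proof.
move=> m_gt0; rewrite big_ltn ?addn_gt0 ?m_gt0 // (@big_cat_nat _ _ _ m) ?leq_addr //=.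
rewrite addrA -[RHS]addrA; f_equal.
rewrite [LHS]big_ltn; last by lia.
f_equal.
rewrite big_nat_rev -[m.+1 in X in \big[_/_]_(X <= _ < _) _]add1n big_addn addnK.
by apply: eq_big_nat => i /andP[i_ge1 i_ltm]; congr g; lia.
Qed.

Lemma sqr_add_sqr_double_pow4 k (a b : nat) :
  (a * a + b * b = 2 * 4 ^ k)%N -> (a * a = 4 ^ k)%N.
Proof.
elim: k a b => [|k IH] a b.
  rewrite expn0 muln1 => sum2; have: (a <= 1)%N by nia.
  have: (b <= 1)%N by nia.
  by case: a sum2 => [|[|a]] //; case: b => [|[|b]].
rewrite expnS -[a]odd_double_half -[b]odd_double_half -!mul2n.
set a' := a./2; set b' := b./2; have pow_gt0 : (0 < 4 ^ k)%N by rewrite expn_gt0.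
case: (odd a); case: (odd b) => /= sum2; try lia.
by have := IH a' b'; nia.
Qed.

Lemma intr_sqr_add_sqr_double_pow4 (R : numDomainType) k (a b : int) :
  (a%:~R : R) ^+ 2 + (b%:~R) ^+ 2 = 2 * (4 ^ k)%:R -> (a%:~R : R) ^+ 2 = (4 ^ k)%:R.
Proof.
have sqr_intr (c : int) : (c%:~R : R) ^+ 2 = (`|c| * `|c|)%N%:R.
  rewrite -rmorphXn /= -(real_normK (num_real c)) -abszE natrM -expr2.
  by rewrite -[in RHS]rmorphXn.
rewrite !sqr_intr -natrD -[2]/(2%:R) -natrM => /eqP; rewrite eqr_nat => /eqP.
by move/sqr_add_sqr_double_pow4 ->.
Qed.

Lemma sgn_addb (a b : bool) : sgn (a (+) b) = sgn a * sgn b.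
Proof. by rewrite /sgn -signr_addb. Qed.

Lemma sgn_neq0 (b : bool) : sgn b != 0.
Proof. by rewrite /sgn signr_eq0. Qed.

Lemma i_pow_bool (b : bool) : 'i ^+ b = (1 + 'i) / 2 + (1 - 'i) / 2 * sgn b.
Proof. by case: b; rewrite /sgn /=; field. Qed.

Lemma normCK_i_mix (a b : algC) : a \is Num.real -> b \is Num.real ->
  `|(1 + 'i) / 2 * a + (1 - 'i) / 2 * b| ^+ 2 = (a ^+ 2 + b ^+ 2) / 2.
Proof.
move=> a_real b_real; rewrite normCK rmorphD !rmorphM /= !rmorphB !rmorphD /=.
rewrite (conj_Creal a_real) (conj_Creal b_real) fmorphV /= rmorph_nat conjCi rmorph1.
by field: (@sqrCi algC).
Qed.

Lemma natr_pow2_sqr (R : pzSemiRingType) k : ((2 ^ k)%:R : R) ^+ 2 = (4 ^ k)%:R.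
Proof. by rewrite -natrX -expnM mulnC expnM. Qed.

Lemma normr_eq_pow2E (R : numDomainType) (z : R) k :
  (`|z| == (2 ^ k)%:R) = (`|z| ^+ 2 == (4 ^ k)%:R).
Proof. by rewrite -(@eqrXn2 _ 2) ?ler0n // natr_pow2_sqr. Qed.

Lemma walsh_intE (F : finFieldType) n (g : F -> bool) (mu : F) :
  walsh n g mu = (\sum_x (-1) ^+ (g x (+) tobit (trm n (mu * x))) : int)%:~R.
Proof. by rewrite rmorph_sum; apply: eq_bigr => x _; rewrite rmorphXn rmorphN1. Qed.

Lemma walsh_real (F : finFieldType) n (g : F -> bool) (mu : F) : walsh n g mu \is Num.real.
Proof. by rewrite walsh_intE realz. Qed.

Section Char2.
Variable F : finFieldType.
Hypothesis pcharF2 : (2 \in [pchar F])%N.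

Lemma exprD_pow2 k (x y : F) : (x + y) ^+ (2 ^ k) = x ^+ (2 ^ k) + y ^+ (2 ^ k).
Proof. by apply: exprDn_pchar; rewrite pnatX (pnatE _ (isT : prime 2)) pcharF2. Qed.

Lemma expr_sum_pow2 k (I : Type) (r : seq I) (P : pred I) (G : I -> F) :
  (\sum_(i <- r | P i) G i) ^+ (2 ^ k) = \sum_(i <- r | P i) G i ^+ (2 ^ k).
Proof.
by apply: (big_morph (fun x => x ^+ (2 ^ k))); [exact: exprD_pow2 | rewrite expr0n expn_eq0].
Qed.

Lemma trmD m (x y : F) : trm m (x + y) = trm m x + trm m y.
Proof. by rewrite /trm -big_split; apply: eq_bigr => i _; rewrite exprD_pow2. Qed.

Lemma trm0 m : trm m (0 : F) = 0.
Proof. by rewrite /trm big1 // => i _; rewrite expr0n expn_eq0. Qed.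

Lemma trm_sum m (I : Type) (r : seq I) (P : pred I) (G : I -> F) :
  trm m (\sum_(i <- r | P i) G i) = \sum_(i <- r | P i) trm m (G i).
Proof. exact: (big_morph _ (@trmD m) (trm0 m)). Qed.

Lemma trm_natrM m (b : bool) (z : F) : trm m (b%:R * z) = b%:R * trm m z.
Proof. by case: b; rewrite ?mul1r ?mul0r ?trm0. Qed.

Lemma natr_addb (a b : bool) : (a%:R + b%:R : F) = (a (+) b)%:R.
Proof. by case: a; case: b; rewrite /= ?addr0 ?add0r // (addrr_pchar2 pcharF2). Qed.

Lemma natr_andb (a b : bool) : (a%:R * b%:R : F) = (a && b)%:R.
Proof. by case: a; case: b; rewrite /= ?mulr0 ?mul0r ?mulr1. Qed.

Lemma natr_odd (k : nat) : (k%:R : F) = (odd k)%:R.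
Proof.
elim: k => [//|k IH]; rewrite mulrS IH /=.
by case: (odd k); rewrite /= ?addr0 // (addrr_pchar2 pcharF2).
Qed.

Lemma tobit_natr (b : bool) : tobit (b%:R : F) = b.
Proof. by case: b; rewrite /tobit ?oner_neq0 ?eqxx. Qed.

Lemma tobit_natr_odd (k : nat) : tobit (k%:R : F) = odd k.
Proof. by rewrite natr_odd tobit_natr. Qed.

Lemma tobitK (z : F) : z ^+ 2 = z -> (tobit z)%:R = z.
Proof.
rewrite /tobit; have [-> //|nz /= z2] := eqVneq z 0.
by apply: (mulfI nz); rewrite mulr1 -expr2.
Qed.

Lemma trm_sqr_arg_fixed m (x : F) : x ^+ (2 ^ m) = x -> trm m (x ^+ 2) = trm m x.
Proof.
move=> xK; have := erefl (\sum_(i < m.+1) x ^+ (2 ^ i)).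
rewrite {1}big_ord_recl big_ord_recr /= xK expr1 addrC /trm.
by move=> /addrI <-; apply: eq_bigr => i _; rewrite -exprM expnS.
Qed.

Lemma trm_sqr_fixed m (x : F) : x ^+ (2 ^ m) = x -> trm m x ^+ 2 = trm m x.
Proof.
move=> /trm_sqr_arg_fixed xK; rewrite -{2}xK /trm -(expn1 2) expr_sum_pow2.
by apply: eq_bigr => i _; rewrite -!exprM mulnC.
Qed.

Section Trace.
Variable n : nat.
Hypothesis cardF : #|F| = (2 ^ n)%N.

Lemma expr_pow2_card (x : F) : x ^+ (2 ^ n) = x.
Proof. by rewrite -cardF expf_card. Qed.

Lemma trm_sqr_arg (x : F) : trm n (x ^+ 2) = trm n x.
Proof. exact/trm_sqr_arg_fixed/expr_pow2_card. Qed.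

Lemma trm_pow2_arg k (x : F) : trm n (x ^+ (2 ^ k)) = trm n x.
Proof.
elim: k => [|k IH]; first by rewrite expr1.
by rewrite expnS mulnC exprM trm_sqr_arg IH.
Qed.

Lemma trm_sqr (x : F) : trm n x ^+ 2 = trm n x.
Proof. exact/trm_sqr_fixed/expr_pow2_card. Qed.

Lemma tobit_trmK (z : F) : (tobit (trm n z))%:R = trm n z.
Proof. exact/tobitK/trm_sqr. Qed.

Lemma tobit_trmD (x y : F) :
  tobit (trm n (x + y)) = tobit (trm n x) (+) tobit (trm n y).
Proof. by rewrite trmD -(tobit_trmK x) -(tobit_trmK y) natr_addb !tobit_natr. Qed.

Section SelfDualBasis.
Variable alpha : 'I_n -> F.
Hypothesis alpha_sd : self_dual alpha.

Definition sd_coord (x : F) (k : 'I_n) : bool := tobit (trm n (x * alpha k)).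

Lemma trm_sum_basis_mul (S : {set 'I_n}) j :
  trm n ((\sum_(i in S) alpha i) * alpha j) = (j \in S)%:R.
Proof.
rewrite mulr_suml trm_sum (eq_bigr (fun i => (i == j)%:R)) => [|i _]; last exact: alpha_sd.
have [jS|jNS] := boolP (j \in S).
  by rewrite (bigD1 j) //= eqxx big1 ?addr0 // => i /andP[_ /negbTE ->].
by rewrite big1 // => i iS; case: eqVneq iS jNS => // ->->.
Qed.

Lemma sd_coord_basis_sum (S : {set 'I_n}) k :
  sd_coord (\sum_(i in S) alpha i) k = (k \in S).
Proof. by rewrite /sd_coord trm_sum_basis_mul tobit_natr. Qed.

Lemma self_dual_expand (x : F) : x = \sum_k (sd_coord x k)%:R * alpha k.
Proof.
pose emb (S : {set 'I_n}) := \sum_(i in S) alpha i.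
have emb_inj : injective emb.
  by move=> S S' eqS; apply/setP => k; rewrite -!sd_coord_basis_sum -/(emb _) eqS.
have card_sets : #|{set 'I_n}| = #|F|.
  have := card_powerset [set: 'I_n]; rewrite cardsT card_ord -cardF => <-.
  by apply: eq_card => S; rewrite powersetE subsetT.
have /codomP[S ->] := inj_card_onto emb_inj (eq_leq (esym card_sets)) x.
rewrite [in LHS]/emb big_mkcond; apply: eq_bigr => k _.
by rewrite sd_coord_basis_sum; case: (k \in S); rewrite ?mul1r ?mul0r.
Qed.

Lemma trm_mul_sd_coord (x y : F) :
  trm n (x * y) = (\sum_k (sd_coord x k && sd_coord y k) : nat)%:R.
Proof.
rewrite {1}(self_dual_expand y) mulr_sumr trm_sum natr_sum; apply: eq_bigr => k _.
by rewrite mulrCA trm_natrM -[trm n _]tobit_trmK mulrC natr_andb.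
Qed.

Lemma sd_coordD (x y : F) k : sd_coord (x + y) k = sd_coord x k (+) sd_coord y k.
Proof. by rewrite /sd_coord mulrDl tobit_trmD. Qed.

Lemma wt_sum_sd_coord (x : F) : wt alpha x = (\sum_k (sd_coord x k : nat))%N.
Proof. by rewrite /wt -sum1_card big_mkcond /=; apply: eq_bigr => k _; rewrite inE. Qed.

Lemma wtD (x y : F) :
  (wt alpha (x + y)%R + 2 * \sum_k (sd_coord x k && sd_coord y k : nat))%N
  = (wt alpha x + wt alpha y)%N.
Proof.
rewrite !wt_sum_sd_coord big_distrr -!big_split; apply: eq_bigr => k _.
by rewrite sd_coordD; case: (sd_coord x k); case: (sd_coord y k).
Qed.

Lemma sign_character (chi : F -> algC) :
  chi 0 = 1 -> {morph chi : x y / x + y >-> x * y} ->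
  exists c : F, forall x, chi x = sgn (tobit (trm n (c * x))).
Proof.
move=> chi0 chiD.
have chi_sign k : chi k = sgn (chi k != 1).
  have : chi k ^+ 2 == 1 by rewrite expr2 -chiD (addrr_pchar2 pcharF2) chi0.
  rewrite sqrf_eq1 => /orP[] /eqP->; first by rewrite eqxx.
  by rewrite lt_eqF // (lt_trans (ltrN10 _) ltr01).
pose S := [set k | chi (alpha k) != 1].
exists (\sum_(k in S) alpha k) => x.
rewrite trm_mul_sd_coord tobit_natr_odd /sgn signr_odd -prodrXr.
rewrite {1}(self_dual_expand x) (big_morph chi chiD chi0).
apply: eq_bigr => k _; rewrite sd_coord_basis_sum inE.
case: (sd_coord x k); last by rewrite mul0r chi0 andbF.
by rewrite mul1r andbT [LHS]chi_sign.
Qed.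

Lemma i_pow_wtD (x y : F) :
  'i ^+ wt alpha (x + y) = 'i ^+ wt alpha x * 'i ^+ wt alpha y * sgn (tobit (trm n (x * y))).
Proof.
rewrite trm_mul_sd_coord tobit_natr_odd /sgn signr_odd.
rewrite -exprD -wtD exprD exprM sqrCi -mulrA -expr2 -exprM.
by rewrite exprM sqrr_sign mulr1.
Qed.

End SelfDualBasis.

Section QuadraticForm.
Hypotheses (n_even : ~~ odd n) (n_gt0 : (0 < n)%N).
Local Notation m := n./2.

Let n_half : n = (m + m)%N.
Proof. by rewrite addnn -[LHS]odd_double_half (negbTE n_even). Qed.

Lemma trm_mul_pow2 i (x y : F) :
  (i <= n)%N -> trm n (x * y ^+ (2 ^ i)) = trm n (x ^+ (2 ^ (n - i)) * y).
Proof.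
move=> le_in; rewrite -(trm_pow2_arg (n - i)) exprMn -exprM -expnD subnKC //.
by rewrite expr_pow2_card.
Qed.

Lemma trm_pow2S_polar i (x y : F) : (i <= n)%N ->
  trm n ((x + y) ^+ (2 ^ i + 1)) = trm n (x ^+ (2 ^ i + 1)) + trm n (y ^+ (2 ^ i + 1))
    + (trm n (x ^+ (2 ^ i) * y) + trm n (x ^+ (2 ^ (n - i)) * y)).
Proof.
move=> le_in; rewrite !addn1 !exprSr exprD_pow2 !mulrDl !mulrDr !trmD.
by rewrite -(trm_mul_pow2 x y le_in) [x * _]mulrC; ring.
Qed.

Lemma trm_half_split (z : F) : trm n z = trm m z + trm m (z ^+ (2 ^ m)).
Proof.
rewrite /trm -!(big_mkord (fun=> true) (fun i => _ ^+ (2 ^ i))).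
rewrite {1}n_half (big_cat_nat (leq0n m) (leq_addr m m)) /=.
rewrite -{2}[m]add0n big_addn addnK; congr (_ + _).
by apply: eq_bigr => i _; rewrite -exprM -expnD addnC.
Qed.

Lemma trm_half_polar (x y : F) :
  trm m ((x + y) ^+ (2 ^ m + 1))
  = trm m (x ^+ (2 ^ m + 1)) + trm m (y ^+ (2 ^ m + 1)) + trm n (x ^+ (2 ^ m) * y).
Proof.
rewrite !addn1 !exprSr exprD_pow2 !mulrDl !mulrDr !trmD trm_half_split.
have -> : (x ^+ (2 ^ m) * y) ^+ (2 ^ m) = y ^+ (2 ^ m) * x.
  by rewrite exprMn -exprM -expnD -n_half expr_pow2_card mulrC.
by ring.
Qed.

Lemma sum_trm_pow2_mul (x y : F) :
  \sum_(i < n) trm n (x ^+ (2 ^ i) * y) = trm n x * trm n y.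
Proof.
rewrite -trm_sum -mulr_suml -/(trm n x) -{1}[trm n x]tobit_trmK.
by rewrite trm_natrM tobit_trmK.
Qed.

Lemma Qpoly_polar (x y : F) :
  Qpoly n (x + y) = Qpoly n x + Qpoly n y + (trm n x * trm n y + trm n (x * y)).
Proof.
pose g i := trm n (x ^+ (2 ^ i) * y).
have m_gt0 : (0 < m)%N by move: n_gt0; rewrite {1}n_half addn_gt0 orbb.
have polar_low : \sum_(1 <= i < m) trm n ((x + y) ^+ (2 ^ i + 1))
    = \sum_(1 <= i < m) trm n (x ^+ (2 ^ i + 1)) + \sum_(1 <= i < m) trm n (y ^+ (2 ^ i + 1))
      + (\sum_(1 <= i < m) g i + \sum_(1 <= i < m) g (n - i)%N).
  rewrite -!big_split; apply: eq_big_nat => i /andP[_ ltim].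
  by apply: trm_pow2S_polar; lia.
have cross : trm n x * trm n y
    = trm n (x * y) + \sum_(1 <= i < m) g i + g m + \sum_(1 <= i < m) g (n - i)%N.
  rewrite -sum_trm_pow2_mul -(big_mkord xpredT g) {1}n_half big_nat_double_split //.
  by rewrite -n_half.
(* In characteristic 2, adding Tr(xy) + Tr(xy) = 0 leaves a plain ring identity. *)
rewrite /Qpoly polar_low trm_half_polar cross -[LHS]addr0.
rewrite -(addrr_pchar2 pcharF2 (trm n (x * y))) /g.
by ring.
Qed.

Lemma Qpoly_sqr (x : F) : Qpoly n x ^+ 2 = Qpoly n x.
Proof.
rewrite /Qpoly -(expn1 2) exprD_pow2 expr_sum_pow2 expn1.
congr (_ + _); first by apply: eq_bigr => i _; rewrite trm_sqr.
apply: trm_sqr_fixed; rewrite -exprM mulnDl mul1n -expnD -n_half exprD.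
by rewrite expr_pow2_card addn1 exprSr mulrC.
Qed.

Lemma tobit_QpolyD (x y : F) :
  tobit (Qpoly n (x + y)) = tobit (Qpoly n x) (+) tobit (Qpoly n y)
    (+) (tobit (trm n x) && tobit (trm n y)) (+) tobit (trm n (x * y)).
Proof.
rewrite Qpoly_polar -(tobitK (Qpoly_sqr x)) -(tobitK (Qpoly_sqr y)).
rewrite -(tobit_trmK x) -(tobit_trmK y) -(tobit_trmK (x * y)).
by rewrite natr_andb !natr_addb !tobit_natr !addbA.
Qed.

End QuadraticForm.

Section NegaWalsh.
Variable alpha : 'I_n -> F.
Hypotheses (alpha_sd : self_dual alpha) (n_even : ~~ odd n) (n_gt0 : (0 < n)%N).

Definition Qsign (x : F) : algC := sgn (tobit (Qpoly n x)) * 'i ^+ tobit (trm n x).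

Lemma QsignD (x y : F) : Qsign (x + y) = Qsign x * Qsign y * sgn (tobit (trm n (x * y))).
Proof.
rewrite /Qsign (tobit_QpolyD n_even n_gt0) tobit_trmD /sgn.
case: (tobit (Qpoly n x)) (tobit (Qpoly n y)) => [] [];
  case: (tobit (trm n x)) (tobit (trm n y)) (tobit (trm n (x * y))) => [] [] [];
  by rewrite /= ?expr0 ?expr1 ?mulr1 ?mul1r ?mulrN1 ?mulN1r ?opprK ?mulrN ?mulNr
             ?opprK -?expr2 ?sqrCi ?opprK.
Qed.

Lemma i_pow_wt_Qsign : exists c : F, forall x,
  'i ^+ wt alpha x = Qsign x * sgn (tobit (trm n (c * x))).
Proof.
have Qsign_neq0 x : Qsign x != 0 by rewrite mulf_neq0 ?sgn_neq0 ?expf_neq0 ?neq0Ci.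
pose chi x := 'i ^+ wt alpha x / Qsign x.
have chiD : {morph chi : x y / x + y >-> x * y}.
  move=> x y; rewrite /chi (i_pow_wtD alpha_sd) QsignD.
  by field; rewrite !Qsign_neq0 sgn_neq0.
have chi0 : chi 0 = 1.
  have chi0_neq0 : chi 0 != 0 by rewrite mulf_neq0 ?invr_eq0 ?Qsign_neq0 ?expf_neq0 ?neq0Ci.
  by apply: (mulfI chi0_neq0); rewrite -chiD addr0 mulr1.
have [c chiE] := sign_character alpha_sd chi0 chiD.
by exists c => x; rewrite -chiE /chi mulrC divfK.
Qed.

Lemma nega_walsh_decomposition : exists c : F, forall (f : F -> bool) (u : F),
  let g x := f x (+) tobit (Qpoly n x) in
  nega_walsh alpha f u = (1 + 'i) / 2 * walsh n g (u + c) + (1 - 'i) / 2 * walsh n g (u + c + 1).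
Proof.
have [c wtE] := i_pow_wt_Qsign; exists c => f u g.
rewrite /nega_walsh /walsh !mulr_sumr -big_split; apply: eq_bigr => x _.
rewrite wtE /Qsign i_pow_bool /g !mulrDl !tobit_trmD !mul1r !sgn_addb /=.
by ring.
Qed.

Lemma negabent_iff_bent_addQ (f : F -> bool) :
  negabent alpha f <-> bent n (fun x => f x (+) tobit (Qpoly n x)).
Proof.
have [c decomp] := nega_walsh_decomposition; set g := fun x => _ (+) _.
have normW mu : `|walsh n g mu| ^+ 2 = walsh n g mu ^+ 2 := real_normK (walsh_real n g mu).
have normNW mu : `|nega_walsh alpha f (mu + c)| ^+ 2
    = (walsh n g mu ^+ 2 + walsh n g (mu + 1) ^+ 2) / 2.
  by rewrite decomp -addrA (addrr_pchar2 pcharF2) addr0 normCK_i_mix ?walsh_real.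
split=> hyp mu; apply/eqP; rewrite normr_eq_pow2E.
- have two_neq0 : (2 : algC) != 0 by rewrite pnatr_eq0.
  move: (hyp (mu + c)) => /eqP; rewrite normr_eq_pow2E normNW normW.
  move=> /eqP /(canRL (divfK two_neq0)); rewrite mulrC !walsh_intE.
  by move=> /intr_sqr_add_sqr_double_pow4 ->.
- rewrite -[mu](addrK_pchar2 pcharF2 c) normNW.
  by rewrite -!normW !hyp natr_pow2_sqr; apply/eqP; field.
Qed.

End NegaWalsh.

End Trace.

End Char2.

Theorem corollary1 (n : nat) (F : finFieldType) (alpha : 'I_n -> F)
  (f : F -> bool) :
  (2 <= n)%N -> ~~ odd n -> (2 \in [pchar F])%N -> #|F| = (2 ^ n)%N ->
  self_dual alpha ->
  (bent_negabent alpha f <->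
   (bent n f /\ bent n (fun x => f x (+) tobit (Qpoly n x)))).
Proof.
move=> n_ge2 n_even pcharF2 cardF alpha_sd.
by rewrite /bent_negabent (negabent_iff_bent_addQ pcharF2 cardF alpha_sd n_even (ltnW n_ge2)).
Qed.
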